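(* Let $X$ be a set with a prebornology $\mathcal{B}$, and let $\mathcal{C}_1,\mathcal{C}_2$ be coarse structures on $X$ whose induced prebornologies both equal $\mathcal{B}$. Then the coarse structures $\exp\mathcal{C}_1$ and $\exp\mathcal{C}_2$, restricted to $\flat(X)=\mathcal{B}\setminus\{\varnothing\}$, induce the same prebornology on $\flat(X)$.
   Context: A coarse structure on $X$ is a family of subsets of $X\times X$ containing the diagonal, closed under subsets, finite unions, inverses and compositions; its induced prebornology is $\{B\subseteq X: B\times B\in\mathcal{C}\}$. For $E\subseteq X\times X$, $\exp E=\{(A,B)\in\mathcal{P}(X)^2: A\subseteq E[B]\text{ and }B\subseteq E[A]\}$, and $\exp\mathcal{C}$ is the coarse structure on $\mathcal{P}(X)$ generated by $\{\exp E: E\in\mathcal{C}\}$; its restriction to $\flat(X)$ is $\{E'\cap(\flat(X)\times\flat(X)):E'\in\exp\mathcal{C}\}$, and the induced prebornology on $\flat(X)$ consists of $\mathcal{S}\subseteq\flat(X)$ with $\mathcal{S}\times\mathcal{S}$ in that restricted structure. *)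

Definition relX (X : Type) := X -> X -> Prop.

Definition IsCoarseStructure {X : Type} (C : relX X -> Prop) : Prop :=
  C (fun x y => x = y) /\
  (forall E F : relX X, C E -> (forall x y, F x y -> E x y) -> C F) /\
  (forall E F : relX X, C E -> C F -> C (fun x y => E x y \/ F x y)) /\
  (forall E : relX X, C E -> C (fun x y => E y x)) /\
  (forall E F : relX X, C E -> C F -> C (fun x z => exists y, E x y /\ F y z)).

Definition IsPrebornology {X : Type} (B : (X -> Prop) -> Prop) : Prop :=
  (forall A A' : X -> Prop, B A -> (forall x, A' x -> A x) -> B A') /\
  (forall x : X, B (fun y => y = x)).

Definition inducedPreb {X : Type} (C : relX X -> Prop) (B : X -> Prop) : Prop :=
  C (fun x y => B x /\ B y).

Definition ballSet {X : Type} (E : relX X) (A : X -> Prop) : X -> Prop :=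
  fun y => exists x, A x /\ E x y.

Definition expRel {X : Type} (E : relX X) : relX (X -> Prop) :=
  fun A B => (forall x, A x -> ballSet E B x) /\ (forall x, B x -> ballSet E A x).

(* exp C : the coarse structure on P(X) generated by {exp E | E in C} *)
Definition expCoarse {X : Type} (C : relX X -> Prop) : relX (X -> Prop) -> Prop :=
  fun F => forall D : relX (X -> Prop) -> Prop,
    IsCoarseStructure D -> (forall E, C E -> D (expRel E)) -> D F.

Definition flatX {X : Type} (B : (X -> Prop) -> Prop) (A : X -> Prop) : Prop :=
  B A /\ exists x, A x.

Definition expRestr {X : Type} (B : (X -> Prop) -> Prop) (C : relX X -> Prop)
  (F : relX (X -> Prop)) : Prop :=
  exists E', expCoarse C E' /\
    forall A A', F A A' <-> (E' A A' /\ flatX B A /\ flatX B A').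

Definition inducedPrebFlat {X : Type} (B : (X -> Prop) -> Prop) (C : relX X -> Prop)
  (S : (X -> Prop) -> Prop) : Prop :=
  (forall A, S A -> flatX B A) /\ expRestr B C (fun A A' => S A /\ S A').

(* A nonempty family S of nonempty bounded sets has S x S in exp C exactly when
   its union is bounded: if S x S lies in exp E, the union is contained in
   E^-1 o (A0 x A0) o E for any A0 in S; conversely S x S lies in exp (U x U)
   for U the union.  This criterion only mentions the prebornology induced by
   C, so it is the same for C1 and C2. *)

From Stdlib Require Import Classical.

Definition bigUnion {X : Type} (S : (X -> Prop) -> Prop) : X -> Prop :=
  fun x => exists A, S A /\ A x.

Section ExpRel.

Variable X : Type.
Implicit Types (E F : relX X) (A : X -> Prop).

Lemma expRel_diag A : expRel (fun x y => x = y) A A.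
Proof. split; intros x hx; exists x; auto. Qed.

Lemma expRel_mono E F A A' :
  (forall x y, E x y -> F x y) -> expRel E A A' -> expRel F A A'.
Proof.
  intros hEF [p q]; split; intros x hx;
    [destruct (p x hx) as [y [hy e]] | destruct (q x hx) as [y [hy e]]];
    exists y; auto.
Qed.

Lemma expRel_sym E A A' : expRel E A A' -> expRel E A' A.
Proof. intros [p q]; split; assumption. Qed.

Lemma expRel_comp E F A A' A'' :
  expRel E A A' -> expRel F A' A'' ->
  expRel (fun x z => (exists y, E x y /\ F y z) \/ (exists y, F x y /\ E y z))
    A A''.
Proof.
  intros [p0 q0] [p1 q1]; split; intros x hx.
  - destruct (p0 x hx) as [b [hb e]]; destruct (p1 b hb) as [c [hc f]].
    exists c; split; [exact hc | right; exists b; auto].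
  - destruct (q1 x hx) as [b [hb e]]; destruct (q0 b hb) as [a [ha f]].
    exists a; split; [exact ha | left; exists b; auto].
Qed.

Lemma expRel_square (U A A' : X -> Prop) :
  (forall x, A x -> U x) -> (forall x, A' x -> U x) ->
  (exists x, A x) -> (exists x, A' x) ->
  expRel (fun x y => U x /\ U y) A A'.
Proof.
  intros hA hA' [a ha] [a' ha']; split; intros x hx.
  - exists a'; auto.
  - exists a; auto.
Qed.

End ExpRel.

Section ExpCoarse.

Variables (X : Type) (C : relX X -> Prop).

Lemma expCoarse_sub (F G : relX (X -> Prop)) :
  expCoarse C F -> (forall A A', G A A' -> F A A') -> expCoarse C G.
Proof. intros hF hGF D hD hgen. exact (proj1 (proj2 hD) F G (hF D hD hgen) hGF). Qed.

Lemma expCoarse_expRel (E : relX X) : C E -> expCoarse C (expRel E).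
Proof. intros hE D _ hgen. exact (hgen E hE). Qed.

Lemma expCoarse_diag : expCoarse C (fun A A' => A = A').
Proof. intros D hD _. exact (proj1 hD). Qed.

Definition expBounded (F : relX (X -> Prop)) : Prop :=
  exists E, C E /\ forall A A', F A A' -> expRel E A A'.

Hypothesis hC : IsCoarseStructure C.

Lemma expBounded_coarse : IsCoarseStructure expBounded.
Proof.
  destruct hC as [hd [_ [hu [_ hc]]]].
  repeat split.
  - exists (fun x y => x = y); split; [exact hd |].
    intros A A' <-; apply expRel_diag.
  - intros F G [E [hE h]] hGF; exists E; auto.
  - intros F G [E0 [hE0 h0]] [E1 [hE1 h1]].
    exists (fun x y => E0 x y \/ E1 x y); split; [auto |].
    intros A A' [h | h]; [apply (expRel_mono _ E0) | apply (expRel_mono _ E1)]; auto.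
  - intros F [E [hE h]]; exists E; split; [exact hE |].
    intros A A' hAA'; apply expRel_sym, h, hAA'.
  - intros F G [E0 [hE0 h0]] [E1 [hE1 h1]].
    exists (fun x z => (exists y, E0 x y /\ E1 y z) \/ (exists y, E1 x y /\ E0 y z)).
    split; [apply hu; apply hc; assumption |].
    intros A A'' [A' [hF hG]]; exact (expRel_comp _ _ _ _ _ _ (h0 _ _ hF) (h1 _ _ hG)).
Qed.

Lemma expCoarse_bounded (F : relX (X -> Prop)) : expCoarse C F -> expBounded F.
Proof.
  intros hF; apply (hF _ expBounded_coarse).
  intros E hE; exists E; auto.
Qed.

Lemma inducedPreb_bigUnion (S : (X -> Prop) -> Prop) (A0 : X -> Prop) (E : relX X) :
  S A0 -> inducedPreb C A0 -> C E ->
  (forall A A', S A -> S A' -> expRel E A A') -> inducedPreb C (bigUnion S).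
Proof.
  destruct hC as [_ [hs [_ [hi hc]]]].
  intros hA0 hA0C hE hS.
  apply (hs (fun x z => exists y, E y x /\
                          exists w, (A0 y /\ A0 w) /\ E w z)).
  - apply hc; [apply hi; exact hE | apply hc; assumption].
  - intros x z [[A [hA hx]] [A' [hA' hz]]].
    destruct (proj2 (hS A0 A hA0 hA) x hx) as [a [ha ea]].
    destruct (proj2 (hS A0 A' hA0 hA') z hz) as [a' [ha' ea']].
    exists a; split; [exact ea |]; exists a'; auto.
Qed.

Variable B : (X -> Prop) -> Prop.
Hypothesis hBC : forall A, inducedPreb C A <-> B A.

Lemma inducedPrebFlat_iff_bigUnion (S : (X -> Prop) -> Prop) :
  inducedPrebFlat B C S <->
  (forall A, S A -> flatX B A) /\ ((exists A, S A) -> B (bigUnion S)).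
Proof.
  split.
  - intros [hSf [E' [hE' hiff]]]; split; [exact hSf |].
    intros [A0 hA0].
    assert (hSS : expCoarse C (fun A A' => S A /\ S A')).
    { apply (expCoarse_sub _ _ hE'); intros A A' h; apply hiff, h. }
    destruct (expCoarse_bounded _ hSS) as [E [hE hb]].
    apply hBC, (inducedPreb_bigUnion S A0 E hA0); auto.
    apply hBC, (hSf A0 hA0).
  - intros [hSf hU]; split; [exact hSf |].
    exists (fun A A' => S A /\ S A'); split.
    + destruct (classic (exists A, S A)) as [hne | hemp].
      * apply (expCoarse_sub _ _ (expCoarse_expRel _ (proj2 (hBC _) (hU hne)))).
        intros A A' [hA hA']; apply expRel_square;
          [intros x hx; exists A | intros x hx; exists A' | apply hSf | apply hSf];
          auto.
      * apply (expCoarse_sub _ _ expCoarse_diag).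
        intros A A' [hA _]; exfalso; eauto.
    + intros A A'; split.
      * intros [hA hA']; auto.
      * intros [h _]; exact h.
Qed.

End ExpCoarse.

Theorem mainTheorem19 (X : Type) (B : (X -> Prop) -> Prop)
  (C1 C2 : relX X -> Prop)
  (hB : IsPrebornology B)
  (hC1 : IsCoarseStructure C1) (hC2 : IsCoarseStructure C2)
  (hB1 : forall A, inducedPreb C1 A <-> B A)
  (hB2 : forall A, inducedPreb C2 A <-> B A) :
  forall S : (X -> Prop) -> Prop,
    inducedPrebFlat B C1 S <-> inducedPrebFlat B C2 S.
Proof.
  intros S.
  rewrite (inducedPrebFlat_iff_bigUnion _ _ hC1 _ hB1 S).
  rewrite (inducedPrebFlat_iff_bigUnion _ _ hC2 _ hB2 S).
  reflexivity.
Qed.
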